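(* For all real numbers $a\le b$, the closed interval $[a,b]$ contains only finitely many cutoffs.
   Context: For a real number $\alpha\ge 1$, define the integer sequence $(P^\alpha_i)_{i\ge 0}$ by $P^\alpha_0=0$, $P^\alpha_1=1$, and for $k\ge 1$, $P^\alpha_{k+1}=P^\alpha_k+P^\alpha_j$, where $j\ge1$ is the unique index with $\alpha P^\alpha_{j-1}<P^\alpha_k\le \alpha P^\alpha_j$. A cutoff is a real number $\alpha\ge 1$ such that for every real $\beta$ with $1\le\beta<\alpha$, the sequences $(P^\alpha_i)$ and $(P^\beta_i)$ are not identical. *)

From Stdlib Require Import Reals Lra Lia List.
Import ListNotations.
Open Scope R_scope.

(* Condition defining the index j used at step k:
   alpha * P_(j-1) < P_k <= alpha * P_j, where l = [P_0; ...; P_k]. *)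
Definition jcond (alpha : R) (l : list nat) (pk j : nat) : bool :=
  match j with
  | O => false
  | S j' =>
      if Rlt_dec (alpha * INR (nth j' l 0%nat)) (INR pk) then
        if Rle_dec (INR pk) (alpha * INR (nth j l 0%nat)) then true else false
      else false
  end.

(* Search the (unique) j in [j, j + fuel) satisfying jcond; 0 if none
   (the paper shows such a j exists and is unique, with 1 <= j <= k). *)
Fixpoint search_j (alpha : R) (l : list nat) (pk j fuel : nat) : nat :=
  match fuel with
  | O => O
  | S f => if jcond alpha l pk j then j else search_j alpha l pk (S j) f
  end.

(* Plist alpha n = [P^alpha_0; ...; P^alpha_n]. *)
Fixpoint Plist (alpha : R) (n : nat) : list nat :=
  match n with
  | O => [0%nat]
  | S m =>
      let l := Plist alpha m in
      match m with
      | O => l ++ [1%nat]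
      | S _ =>
          let pk := last l 0%nat in
          let j := search_j alpha l pk 1 (length l) in
          l ++ [(pk + nth j l 0%nat)%nat]
      end
  end.

Definition P (alpha : R) (i : nat) : nat := nth i (Plist alpha i) 0%nat.

Definition cutoff (alpha : R) : Prop :=
  1 <= alpha /\
  forall beta : R, 1 <= beta < alpha -> ~ (forall i : nat, P alpha i = P beta i).

From Stdlib Require Import Reals Lra Lia Arith List Bool Classical.
Import ListNotations.
Open Scope R_scope.

(* For a fixed ratio alpha let j_k be the least j with P_k <= alpha P_j.  The lag
   k - j_k never decreases and is at most alpha^2, so it is eventually a constant d,
   after which P_(k+1) = P_k + P_(k-d).  Both sides of the strict inequality
   alpha P_(j_k - 1) < P_k obey this linear recurrence, so it holds with a uniform
   margin alpha + e, and every beta in [alpha, alpha + e) yields the same sequence.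
   The same argument for the strict rule P_k < alpha P_j shows that all beta slightly
   below alpha yield one common sequence.  Hence cutoffs are isolated, and a compact
   interval contains only finitely many of them. *)

Fixpoint first_true (t : nat -> bool) (j fuel : nat) : nat :=
  match fuel with
  | O => O
  | S f => if t j then j else first_true t (S j) f
  end.

Lemma first_true_found (t : nat -> bool) j fuel i :
  (j <= i < j + fuel)%nat -> t i = true ->
  (j <= first_true t j fuel <= i)%nat /\ t (first_true t j fuel) = true.
Proof.
  revert j; induction fuel as [|fuel IH]; intros j Hi Hti; simpl; [lia|].
  destruct (t j) eqn:Htj; [split; [lia|exact Htj]|].
  assert (i <> j) by (intros ->; congruence).
  destruct (IH (S j)) as [Hr Htr]; [lia|exact Hti|].
  split; [lia|exact Htr].
Qed.

Lemma first_true_min (t : nat -> bool) j fuel i :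
  (j <= i < first_true t j fuel)%nat -> t i = false.
Proof.
  revert j; induction fuel as [|fuel IH]; intros j Hi; simpl in Hi; [lia|].
  destruct (t j) eqn:Htj; [lia|].
  destruct (Nat.eq_dec i j) as [->|Hne]; [exact Htj|].
  apply (IH (S j)); lia.
Qed.

Lemma first_true_ext_upto (t u : nat -> bool) j fuel i :
  (j <= i < j + fuel)%nat -> t i = true ->
  (forall i', (j <= i' <= i)%nat -> t i' = u i') ->
  first_true t j fuel = first_true u j fuel.
Proof.
  revert j; induction fuel as [|fuel IH]; intros j Hi Hti Htu; simpl; [reflexivity|].
  rewrite <- (Htu j) by lia.
  destruct (t j) eqn:Htj; [reflexivity|].
  assert (i <> j) by (intros ->; congruence).
  apply IH; [lia|exact Hti|]. intros i' Hi'; apply Htu; lia.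
Qed.

Lemma first_true_rising (t u : nat -> bool) j fuel :
  (forall i, u (S i) = negb (t i) && t (S i)) -> t j = false ->
  first_true u (S j) fuel = first_true t (S j) fuel.
Proof.
  intros Hu; revert j; induction fuel as [|fuel IH]; intros j Hj; simpl; [reflexivity|].
  rewrite Hu, Hj; simpl.
  destruct (t (S j)) eqn:Htj; [reflexivity|].
  now apply IH.
Qed.

Lemma nondecreasing_bounded_stationary (f : nat -> nat) (B : nat) :
  (forall k, (f k <= f (S k))%nat) -> (forall k, (f k <= B)%nat) ->
  exists K, forall k, (K <= k)%nat -> f k = f K.
Proof.
  intros Hmono Hbound.
  assert (Hle : forall k k', (k <= k')%nat -> (f k <= f k')%nat).
  { induction 1 as [|k' _ IH]; [lia|]. specialize (Hmono k'); lia. }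
  assert (Hgap : forall n K, (B - f K <= n)%nat ->
            exists K', forall k, (K' <= k)%nat -> f k = f K').
  { induction n as [|n IH]; intros K HK.
    - exists K. intros k Hk. specialize (Hle K k Hk). specialize (Hbound k). lia.
    - destruct (classic (exists k, (K <= k)%nat /\ f k <> f K)) as [[k [Hk Hne]]|Hno].
      + apply (IH k). specialize (Hle K k Hk). specialize (Hbound k). lia.
      + exists K. intros k Hk. apply NNPP. intros Hne. apply Hno. eauto. }
  apply (Hgap B 0%nat). lia.
Qed.

Lemma ratio_bound_on_window (x y : nat -> R) n :
  (forall k, (1 <= k)%nat -> 0 < x k) -> (forall k, (1 <= k)%nat -> 0 <= y k) ->
  exists m, 0 < m /\ forall k, (1 <= k <= n)%nat -> m * y k <= x k.
Proof.
  intros Hx Hy. induction n as [|n [m [Hm Hmk]]].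
  - exists 1. split; [lra|]. intros k Hk; lia.
  - set (q := x (S n) / (y (S n) + 1)).
    assert (Hx1 := Hx (S n) ltac:(lia)). assert (Hy1 := Hy (S n) ltac:(lia)).
    assert (Hq : 0 < q) by (apply Rdiv_lt_0_compat; lra).
    assert (Hqy : q * (y (S n) + 1) = x (S n)) by (unfold q; field; lra).
    assert (Hmin1 : Rmin m q <= m) by apply Rmin_l.
    assert (Hmin2 : Rmin m q <= q) by apply Rmin_r.
    exists (Rmin m q). split; [now apply Rmin_pos|]. intros k Hk.
    destruct (Nat.eq_dec k (S n)) as [->|Hne].
    + nra.
    + specialize (Hmk k ltac:(lia)). specialize (Hy k ltac:(lia)). nra.
Qed.

Lemma recurrent_ratio_bound (x y : nat -> R) d N :
  (forall k, (1 <= k)%nat -> 0 < x k) -> (forall k, (1 <= k)%nat -> 0 <= y k) ->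
  (forall k, (N <= k)%nat ->
     x (S (k + d)) = x (k + d)%nat + x k /\ y (S (k + d)) = y (k + d)%nat + y k) ->
  exists m, 0 < m /\ forall k, (1 <= k)%nat -> m * y k <= x k.
Proof.
  intros Hx Hy Hrec.
  destruct (ratio_bound_on_window x y (S (N + d)) Hx Hy) as [m [Hm Hwin]].
  exists m. split; [exact Hm|].
  intros k; induction k as [k IH] using lt_wf_ind; intros Hk.
  destruct (Nat.le_gt_cases k (S (N + d))) as [Hle|Hgt]; [apply Hwin; lia|].
  replace k with (S (k - d - 1 + d)) by lia.
  destruct (Hrec (k - d - 1)%nat ltac:(lia)) as [-> ->].
  pose proof (IH (k - d - 1 + d)%nat ltac:(lia) ltac:(lia)).
  pose proof (IH (k - d - 1)%nat ltac:(lia) ltac:(lia)).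
  lra.
Qed.

Lemma no_accumulation_finite_on_interval (S : R -> Prop) :
  (forall c, exists e, 0 < e /\ forall x, S x -> c - e < x < c + e -> x = c) ->
  forall a b, a <= b -> exists l, forall x, a <= x <= b -> S x -> In x l.
Proof.
  intros Hiso a b Hab.
  set (F t := exists l : list R, forall x, a <= x <= t -> S x -> In x l).
  set (E t := a <= t <= b /\ F t).
  assert (HE : bound E) by (exists b; intros t [[_ Ht] _]; exact Ht).
  assert (Ea : E a) by (split; [lra|exists [a]; intros x Hx _; left; lra]).
  destruct (completeness E HE (ex_intro _ a Ea)) as [m [Hub Hlub]].
  assert (Ham : a <= m) by (apply Hub, Ea).
  destruct (Hiso m) as [e [He Hm]].
  assert (Hclose : exists t, E t /\ m - e < t).
  { apply NNPP. intros Hno.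
    assert (m <= m - e); [|lra].
    apply Hlub. intros t Et. destruct (Rle_or_lt t (m - e)) as [Hle|Hlt]; [exact Hle|].
    exfalso. apply Hno. exists t. split; assumption. }
  destruct Hclose as [t [[_ [l Hl]] Ht]].
  assert (Fm : forall u, u <= m + e / 2 -> F u).
  { intros u Hu. exists (m :: l). intros x Hx HSx.
    destruct (Rle_or_lt x t) as [Hxt|Hxt].
    - right. apply Hl; [lra|exact HSx].
    - left. symmetry. apply Hm; [exact HSx|lra]. }
  destruct (Rle_or_lt b (m + e / 2)) as [Hb|Hb]; [apply Fm, Hb|].
  assert (Em : E (m + e / 2)) by (split; [lra|apply Fm; lra]).
  apply Hub in Em. lra.
Qed.

Section FitSequence.

Variable fits : nat -> nat -> bool.

(* [Plist] with the rule P_k <= alpha P_j abstracted to a test [fits]: the index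
   used is the first j >= 1 that passes the test. *)
Fixpoint fit_list (n : nat) : list nat :=
  match n with
  | O => [0%nat]
  | S m =>
      let l := fit_list m in
      match m with
      | O => l ++ [1%nat]
      | S _ =>
          let pk := last l 0%nat in
          let j := first_true (fun j => fits pk (nth j l 0%nat)) 1 (length l) in
          l ++ [(pk + nth j l 0)%nat]
      end
  end.

Definition fitseq (k : nat) : nat := nth k (fit_list k) 0%nat.

Definition jump (k : nat) : nat :=
  first_true (fun j => fits (fitseq k) (fitseq j)) 1 (S k).

Lemma fit_list_SS n : fit_list (S (S n)) =
  let l := fit_list (S n) in
  let pk := last l 0%nat in
  let j := first_true (fun j => fits pk (nth j l 0%nat)) 1 (length l) in
  l ++ [(pk + nth j l 0)%nat].
Proof. reflexivity. Qed.

Lemma length_fit_list n : length (fit_list n) = S n.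
Proof.
  induction n as [|[|n] IH]; [reflexivity|reflexivity|].
  rewrite fit_list_SS; cbv zeta. rewrite length_app, IH; simpl; lia.
Qed.

Lemma fit_list_snoc n : exists x, fit_list (S n) = fit_list n ++ [x].
Proof. destruct n; [|rewrite fit_list_SS]; eexists; reflexivity. Qed.

Lemma nth_fit_list n i : (i <= n)%nat -> nth i (fit_list n) 0%nat = fitseq i.
Proof.
  induction n as [|n IH]; intros Hi.
  - replace i with 0%nat by lia; reflexivity.
  - destruct (Nat.eq_dec i (S n)) as [->|Hne]; [reflexivity|].
    destruct (fit_list_snoc n) as [x ->].
    rewrite app_nth1 by (rewrite length_fit_list; lia).
    apply IH; lia.
Qed.

Lemma last_fit_list n : last (fit_list n) 0%nat = fitseq n.
Proof.
  destruct n as [|n]; [reflexivity|].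
  unfold fitseq; destruct (fit_list_snoc n) as [x ->].
  rewrite last_last, app_nth2, length_fit_list, Nat.sub_diag by (rewrite length_fit_list; lia).
  reflexivity.
Qed.

Lemma fitseq_step k : (1 <= k)%nat ->
  fitseq (S k) =
  (fitseq k + nth (first_true (fun j => fits (fitseq k) (nth j (fit_list k) 0%nat)) 1 (S k))
                  (fit_list k) 0)%nat.
Proof.
  intros Hk. destruct k as [|k]; [lia|].
  unfold fitseq at 1. rewrite fit_list_SS; cbv zeta.
  rewrite length_fit_list, last_fit_list.
  rewrite app_nth2, length_fit_list, Nat.sub_diag by (rewrite length_fit_list; lia).
  reflexivity.
Qed.

Lemma fitseq_le_succ k : (fitseq k <= fitseq (S k))%nat.
Proof. destruct k as [|k]; [cbv; lia|]. rewrite (fitseq_step (S k)); lia. Qed.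

Lemma fitseq_mono m n : (m <= n)%nat -> (fitseq m <= fitseq n)%nat.
Proof. induction 1 as [|n _ IH]; [lia|]. pose proof (fitseq_le_succ n); lia. Qed.

Lemma fitseq_ge1 k : (1 <= k)%nat -> (1 <= fitseq k)%nat.
Proof. intros Hk. apply (fitseq_mono 1 k Hk). Qed.

Lemma INR_fitseq_ge1 k : (1 <= k)%nat -> 1 <= INR (fitseq k).
Proof. intros Hk. apply (le_INR 1), fitseq_ge1, Hk. Qed.

End FitSequence.

Record fit_test (alpha : R) (fits : nat -> nat -> bool) : Prop := {
  fit_refl : forall p, (1 <= p)%nat -> fits p p = true;
  fit_bound : forall p q, fits p q = true -> INR p <= alpha * INR q;
  fit_add : forall p q p' q',
    fits p q = true -> fits p' q' = true -> fits (p + p')%nat (q + q')%nat = true;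
  fit_mono_r : forall p q q', fits p q = true -> (q <= q')%nat -> fits p q' = true
}.

Arguments fit_refl {alpha fits}.
Arguments fit_bound {alpha fits}.
Arguments fit_add {alpha fits}.
Arguments fit_mono_r {alpha fits}.

Section Jumps.

Variables (alpha : R) (fits : nat -> nat -> bool).
Hypothesis Hfits : fit_test alpha fits.

Notation P := (fitseq fits).
Notation J := (jump fits).

Lemma fit_test_alpha_ge1 : 1 <= alpha.
Proof.
  pose proof (fit_bound Hfits 1 1 (fit_refl Hfits 1 (le_n 1))) as H.
  simpl in H. lra.
Qed.

Lemma jump_spec k : (1 <= k)%nat -> (1 <= J k <= k)%nat /\ fits (P k) (P (J k)) = true.
Proof.
  intros Hk. destruct (first_true_found (fun j => fits (P k) (P j)) 1 (S k) k)
    as [HJ Hfit]; [lia|apply (fit_refl Hfits), fitseq_ge1, Hk|].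
  split; [exact HJ|exact Hfit].
Qed.

Lemma jump_minimal k i : (1 <= i < J k)%nat -> fits (P k) (P i) = false.
Proof. apply (first_true_min (fun j => fits (P k) (P j))). Qed.

Lemma jump_le_iff k j : (1 <= k)%nat -> (1 <= j)%nat ->
  (J k <= j)%nat <-> fits (P k) (P j) = true.
Proof.
  intros Hk Hj. split.
  - intros HJj. apply (fit_mono_r Hfits (P k) (P (J k))); [apply jump_spec, Hk|].
    now apply fitseq_mono.
  - intros Hfit. destruct (Nat.le_gt_cases (J k) j) as [Hle|Hgt]; [exact Hle|].
    rewrite jump_minimal in Hfit by lia. discriminate.
Qed.

Lemma fitseq_succ k : (1 <= k)%nat -> P (S k) = (P k + P (J k))%nat.
Proof.
  intros Hk. rewrite fitseq_step by exact Hk.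
  assert (Hsearch : first_true (fun j => fits (P k) (nth j (fit_list fits k) 0%nat)) 1 (S k) = J k).
  { apply (first_true_ext_upto _ _ 1 (S k) k); [lia| |].
    - rewrite nth_fit_list by lia. apply (fit_refl Hfits), fitseq_ge1, Hk.
    - intros i Hi. now rewrite nth_fit_list by lia. }
  rewrite Hsearch, nth_fit_list; [reflexivity|apply jump_spec, Hk].
Qed.

Lemma jump_succ_le k : (1 <= k)%nat -> (J (S k) <= S (J k))%nat.
Proof.
  intros Hk. destruct (jump_spec k Hk) as [HJ Hfit].
  destruct (jump_spec (J k) ltac:(lia)) as [_ Hfit'].
  apply jump_le_iff; [lia|lia|].
  rewrite (fitseq_succ k), (fitseq_succ (J k)) by lia.
  now apply (fit_add Hfits).
Qed.

Lemma fitseq_growth j n : (1 <= j)%nat ->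
  (alpha + INR n) * INR (P j) <= alpha * INR (P (j + n)).
Proof.
  intros Hj. induction n as [|n IH].
  - rewrite Nat.add_0_r. simpl. lra.
  - destruct (jump_spec (j + n)) as [_ Hfit]; [lia|].
    apply (fit_bound Hfits) in Hfit.
    pose proof (le_INR _ _ (fitseq_mono fits j (j + n) ltac:(lia))).
    rewrite Nat.add_succ_r, fitseq_succ, plus_INR, S_INR by lia.
    lra.
Qed.

Lemma lag_le k : (1 <= k)%nat -> INR (k - J k) <= alpha * alpha.
Proof.
  intros Hk. destruct (jump_spec k Hk) as [HJ Hfit].
  apply (fit_bound Hfits) in Hfit.
  pose proof (fitseq_growth (J k) (k - J k) ltac:(lia)) as Hgrowth.
  replace (J k + (k - J k))%nat with k in Hgrowth by lia.
  pose proof (INR_fitseq_ge1 fits (J k) ltac:(lia)).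
  pose proof fit_test_alpha_ge1.
  assert (alpha + INR (k - J k) <= alpha * alpha) by
    (apply Rmult_le_reg_r with (INR (P (J k))); nra).
  lra.
Qed.

Lemma lag_eventually_constant :
  exists K d, (1 <= K)%nat /\ forall k, (K <= k)%nat -> (J k + d)%nat = k.
Proof.
  destruct (INR_unbounded (alpha * alpha)) as [B HB].
  destruct (nondecreasing_bounded_stationary (fun k => S k - J (S k))%nat B) as [K HK].
  - intros k. pose proof (jump_succ_le (S k)). pose proof (jump_spec (S k)). lia.
  - intros k. pose proof (lag_le (S k) ltac:(lia)).
    apply Nat.lt_le_incl, INR_lt. lra.
  - exists (S K), (S K - J (S K))%nat. split; [lia|]. intros k Hk.
    destruct k as [|k]; [lia|]. specialize (HK k ltac:(lia)).
    destruct (jump_spec (S k)) as [HJ _]; [lia|]. lia.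
Qed.

Lemma fitseq_lag_recurrence K d : (1 <= K)%nat ->
  (forall k, (K <= k)%nat -> (J k + d)%nat = k) ->
  forall k, (K <= k)%nat -> P (S (k + d)) = (P (k + d) + P k)%nat.
Proof.
  intros HK Hlag k Hk. rewrite fitseq_succ by lia.
  specialize (Hlag (k + d)%nat ltac:(lia)). do 2 f_equal. lia.
Qed.

End Jumps.

Lemma fitseq_agree alpha (f g : nat -> nat -> bool) : fit_test alpha f ->
  (forall k j, (1 <= j <= k)%nat ->
     f (fitseq f k) (fitseq f j) = g (fitseq f k) (fitseq f j)) ->
  forall k, fitseq f k = fitseq g k.
Proof.
  intros Hf Hfg.
  assert (Hlist : forall n, fit_list f n = fit_list g n).
  { induction n as [|[|n] IH]; [reflexivity|reflexivity|].
    rewrite !fit_list_SS, <- IH; cbv zeta.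
    rewrite last_fit_list, length_fit_list.
    rewrite (first_true_ext_upto _ (fun j => g (fitseq f (S n)) (nth j (fit_list f (S n)) 0%nat))
               1 (S (S n)) (S n)); [reflexivity|lia| |].
    - rewrite nth_fit_list by lia. apply (fit_refl Hf), fitseq_ge1; lia.
    - intros i Hi. rewrite nth_fit_list by lia. apply Hfg; lia. }
  intros k. unfold fitseq. now rewrite Hlist.
Qed.

Definition le_fit (alpha : R) (p q : nat) : bool :=
  if Rle_dec (INR p) (alpha * INR q) then true else false.

Definition lt_fit (alpha : R) (p q : nat) : bool :=
  if Rlt_dec (INR p) (alpha * INR q) then true else false.

Lemma le_fit_true alpha p q : le_fit alpha p q = true <-> INR p <= alpha * INR q.
Proof. unfold le_fit; destruct Rle_dec; intuition congruence. Qed.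

Lemma le_fit_false alpha p q : le_fit alpha p q = false <-> alpha * INR q < INR p.
Proof. unfold le_fit; destruct Rle_dec; split; intros; lra || congruence. Qed.

Lemma lt_fit_true alpha p q : lt_fit alpha p q = true <-> INR p < alpha * INR q.
Proof. unfold lt_fit; destruct Rlt_dec; intuition congruence. Qed.

Lemma le_fit_test alpha : 1 <= alpha -> fit_test alpha (le_fit alpha).
Proof.
  intros Ha. split; intros *; rewrite ?le_fit_true.
  - intros Hp%le_INR; simpl in Hp; nra.
  - trivial.
  - rewrite !plus_INR; lra.
  - intros Hpq Hq%le_INR; nra.
Qed.

Lemma lt_fit_test alpha : 1 < alpha -> fit_test alpha (lt_fit alpha).
Proof.
  intros Ha. split; intros *; rewrite ?lt_fit_true.
  - intros Hp%le_INR; simpl in Hp; nra.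
  - lra.
  - rewrite !plus_INR; lra.
  - intros Hpq Hq%le_INR; nra.
Qed.

Lemma Plist_SS alpha n : Plist alpha (S (S n)) =
  let l := Plist alpha (S n) in
  let pk := last l 0%nat in
  let j := search_j alpha l pk 1 (length l) in
  l ++ [(pk + nth j l 0)%nat].
Proof. reflexivity. Qed.

Lemma search_j_first_true alpha l pk j fuel :
  search_j alpha l pk j fuel = first_true (jcond alpha l pk) j fuel.
Proof.
  revert j; induction fuel as [|fuel IH]; intros j; simpl; [reflexivity|].
  now rewrite IH.
Qed.

Lemma jcond_rising alpha l pk i :
  jcond alpha l pk (S i) =
  negb (le_fit alpha pk (nth i l 0%nat)) && le_fit alpha pk (nth (S i) l 0%nat).
Proof.
  unfold jcond, le_fit.
  destruct (Rlt_dec _ _), (Rle_dec _ (alpha * INR (nth i l 0%nat))), (Rle_dec _ _);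
    simpl; reflexivity || lra.
Qed.

Lemma Plist_fit_list alpha n : Plist alpha n = fit_list (le_fit alpha) n.
Proof.
  induction n as [|[|n] IH]; [reflexivity|reflexivity|].
  rewrite Plist_SS, fit_list_SS, IH; cbv zeta.
  set (l := fit_list (le_fit alpha) (S n)).
  rewrite search_j_first_true,
    (first_true_rising (fun j => le_fit alpha (last l 0%nat) (nth j l 0%nat)));
    [reflexivity|intros i; apply jcond_rising|].
  apply le_fit_false.
  unfold l; rewrite last_fit_list, nth_fit_list by lia. simpl INR. rewrite Rmult_0_r.
  pose proof (INR_fitseq_ge1 (le_fit alpha) (S n) ltac:(lia)). lra.
Qed.

Lemma P_fitseq alpha i : P alpha i = fitseq (le_fit alpha) i.
Proof. unfold P. now rewrite Plist_fit_list. Qed.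

Section RightConstancy.

Variable alpha : R.
Hypothesis Ha : 1 <= alpha.

Notation Q := (fitseq (le_fit alpha)).
Notation J := (jump (le_fit alpha)).

Lemma le_fit_margin : exists e, 0 < e /\ forall k, (1 <= k)%nat ->
  (alpha + e) * INR (Q (J k - 1)%nat) <= INR (Q k).
Proof.
  pose proof (le_fit_test alpha Ha) as Ht.
  destruct (lag_eventually_constant alpha _ Ht) as [K [d [HK Hlag]]].
  destruct (recurrent_ratio_bound (fun k => INR (Q k) - alpha * INR (Q (J k - 1)%nat))
              (fun k => INR (Q (J k - 1)%nat)) d (S K)) as [m [Hm Hmk]].
  - intros k Hk. destruct (jump_spec alpha _ Ht k Hk) as [HJ _].
    pose proof (INR_fitseq_ge1 (le_fit alpha) k Hk).
    destruct (Nat.eq_dec (J k) 1) as [->|HJ1].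
    + change (Q (1 - 1)%nat) with 0%nat; simpl INR; lra.
    + assert (Hgap := jump_minimal (le_fit alpha) k (J k - 1) ltac:(lia)).
      apply le_fit_false in Hgap. lra.
  - intros k _. apply pos_INR.
  - intros k Hk.
    assert (E1 : (J (S (k + d)) - 1 = k)%nat) by (specialize (Hlag (S (k + d))); lia).
    assert (E2 : (J (k + d) - 1 = k - 1)%nat) by (specialize (Hlag (k + d)%nat); lia).
    assert (E3 : J (k - 1)%nat = (J k - 1)%nat)
      by (pose proof (Hlag (k - 1)%nat); pose proof (Hlag k); lia).
    assert (Hk1 : Q k = (Q (k - 1) + Q (J k - 1))%nat).
    { rewrite <- E3, <- (fitseq_succ alpha _ Ht) by lia. f_equal; lia. }
    rewrite E1, E2, (fitseq_lag_recurrence alpha _ Ht K d HK Hlag k) by lia.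
    rewrite Hk1, !plus_INR. split; ring.
  - exists m. split; [exact Hm|]. intros k Hk. specialize (Hmk k Hk). simpl in Hmk. lra.
Qed.

Lemma P_right_constant : exists e, 0 < e /\
  forall beta, alpha <= beta < alpha + e -> forall i, P beta i = P alpha i.
Proof.
  destruct le_fit_margin as [e [He Hgap]].
  exists e. split; [exact He|]. intros beta Hb i.
  rewrite !P_fitseq. symmetry.
  apply (fitseq_agree alpha); [now apply le_fit_test|].
  intros k j Hkj. apply Bool.eq_true_iff_eq.
  rewrite <- (jump_le_iff alpha _ (le_fit_test alpha Ha)) by lia. rewrite le_fit_true.
  pose proof (INR_fitseq_ge1 (le_fit alpha) j ltac:(lia)).
  destruct (jump_spec alpha _ (le_fit_test alpha Ha) k ltac:(lia)) as [HJ Hfit].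
  apply le_fit_true in Hfit.
  split.
  - intros HJj. pose proof (le_INR _ _ (fitseq_mono (le_fit alpha) _ _ HJj)). nra.
  - intros Hbeta. destruct (Nat.le_gt_cases (J k) j) as [Hle|Hgt]; [exact Hle|exfalso].
    pose proof (le_INR _ _ (fitseq_mono (le_fit alpha) j (J k - 1) ltac:(lia))).
    specialize (Hgap k ltac:(lia)). nra.
Qed.

End RightConstancy.

Section LeftConstancy.

Variable alpha : R.
Hypothesis Ha : 1 < alpha.

Notation Q := (fitseq (lt_fit alpha)).
Notation J := (jump (lt_fit alpha)).

Lemma lt_fit_margin : exists e, 0 < e /\ forall k, (1 <= k)%nat ->
  INR (Q k) <= (alpha - e) * INR (Q (J k)).
Proof.
  pose proof (lt_fit_test alpha Ha) as Ht.
  destruct (lag_eventually_constant alpha _ Ht) as [K [d [HK Hlag]]].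
  destruct (recurrent_ratio_bound (fun k => alpha * INR (Q (J k)) - INR (Q k))
              (fun k => INR (Q (J k))) d K) as [m [Hm Hmk]].
  - intros k Hk. destruct (jump_spec alpha _ Ht k Hk) as [_ Hfit].
    apply lt_fit_true in Hfit. lra.
  - intros k _. apply pos_INR.
  - intros k Hk.
    assert (E1 : J (S (k + d)) = S k) by (specialize (Hlag (S (k + d))); lia).
    assert (E2 : J (k + d)%nat = k) by (specialize (Hlag (k + d)%nat); lia).
    rewrite E1, E2, (fitseq_lag_recurrence alpha _ Ht K d HK Hlag k),
      (fitseq_succ alpha _ Ht k) by lia.
    rewrite !plus_INR. split; ring.
  - exists m. split; [exact Hm|]. intros k Hk. specialize (Hmk k Hk). simpl in Hmk. lra.
Qed.

Lemma P_left_constant : exists e, 0 < e /\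
  forall beta, alpha - e < beta < alpha -> forall i, P beta i = Q i.
Proof.
  destruct lt_fit_margin as [e [He Hgap]].
  exists e. split; [exact He|]. intros beta Hb i.
  rewrite P_fitseq. symmetry.
  apply (fitseq_agree alpha); [now apply lt_fit_test|].
  intros k j Hkj. apply Bool.eq_true_iff_eq.
  rewrite <- (jump_le_iff alpha _ (lt_fit_test alpha Ha)) by lia. rewrite le_fit_true.
  pose proof (INR_fitseq_ge1 (lt_fit alpha) j ltac:(lia)).
  pose proof (INR_fitseq_ge1 (lt_fit alpha) k ltac:(lia)).
  destruct (jump_spec alpha _ (lt_fit_test alpha Ha) k ltac:(lia)) as [HJ _].
  pose proof (INR_fitseq_ge1 (lt_fit alpha) (J k) ltac:(lia)).
  specialize (Hgap k ltac:(lia)).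
  split.
  - intros HJj. pose proof (le_INR _ _ (fitseq_mono (lt_fit alpha) _ _ HJj)).
    assert (0 < alpha - e) by nra. nra.
  - intros Hbeta. apply (jump_le_iff alpha _ (lt_fit_test alpha Ha)); [lia|lia|].
    apply lt_fit_true. nra.
Qed.

End LeftConstancy.

Lemma cutoff_isolated alpha :
  exists e, 0 < e /\ forall x, cutoff x -> alpha - e < x < alpha + e -> x = alpha.
Proof.
  destruct (Rlt_or_le alpha 1) as [Hlt1|Hge1].
  { exists (1 - alpha). split; [lra|]. intros x [Hx _] Hxa. lra. }
  destruct (P_right_constant alpha Hge1) as [e1 [He1 Hright]].
  assert (Habove : forall x, cutoff x -> alpha < x < alpha + e1 -> False).
  { intros x [_ Hcut] Hx. apply (Hcut alpha); [lra|].
    intros i. apply Hright. lra. }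
  destruct (Req_dec alpha 1) as [->|Hne1].
  { exists e1. split; [exact He1|]. intros x Hx Hxa.
    destruct (Rtotal_order x 1) as [Hlt|[Heq|Hgt]]; [destruct Hx; lra|exact Heq|].
    exfalso. apply (Habove x Hx). lra. }
  destruct (P_left_constant alpha ltac:(lra)) as [e2 [He2 Hleft]].
  set (e := Rmin e1 (Rmin e2 (alpha - 1))).
  assert (e <= e1) by apply Rmin_l.
  assert (e <= e2) by (eapply Rle_trans; [apply Rmin_r|apply Rmin_l]).
  assert (e <= alpha - 1) by (eapply Rle_trans; [apply Rmin_r|apply Rmin_r]).
  exists e. split; [apply Rmin_pos; [exact He1|apply Rmin_pos; lra]|].
  intros x Hx Hxa.
  destruct (Rtotal_order x alpha) as [Hlt|[Heq|Hgt]]; [exfalso|exact Heq|].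
  - destruct Hx as [_ Hcut]. apply (Hcut ((alpha - e + x) / 2)); [lra|].
    intros i. rewrite (Hleft x), (Hleft ((alpha - e + x) / 2)) by lra. reflexivity.
  - exfalso. apply (Habove x Hx). lra.
Qed.

Theorem mainTheorem9 : forall a b : R, a <= b ->
  exists l : list R, forall x : R, a <= x <= b -> cutoff x -> In x l.
Proof. apply no_accumulation_finite_on_interval, cutoff_isolated. Qed.
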